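(* Let $d\ge3$, $\Omega=\{1,\ldots,d\}$, and $F\le F'\le\mathrm{Sym}(\Omega)$ with $F'$ preserving the orbits of $F$, and suppose $F'$ is not 2-transitive on $\Omega$. Then there exist a vertex $x$ of $T$ and an integer $n\in\{1,2\}$ such that the stabilizer of $x$ in $G(F,F')$ does not act transitively on the set of geodesic segments of length $n$ starting at $x$.
   Context: Let $T=\mathcal{T}_d$ be the $d$-regular tree with a fixed edge coloring $c\colon E(T)\to\Omega$ whose restriction $c_v$ to the edges $E(v)$ at each vertex $v$ is a bijection onto $\Omega$. For $g\in\mathrm{Aut}(T)$, $\sigma(g,v)=c_{gv}\circ g_v\circ c_v^{-1}$ with $g_v\colon E(v)\to E(gv)$ induced by $g$. $U(F')=\{g:\sigma(g,v)\in F'\ \forall v\}$, $G(F)=\{g:\sigma(g,v)\in F$ for all but finitely many $v\}$, $G(F,F')=G(F)\cap U(F')$. *)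

From mathcomp Require Import all_boot all_fingroup all_solvable.
Set Implicit Arguments. Unset Strict Implicit. Unset Printing Implicit Defensive.

(* Model of the d-regular tree T_d with its canonical legal edge colouring:
   vertices are reduced words over Omega = 'I_d (no two consecutive equal
   letters), stored with the most recent letter at the head; the neighbour of
   w across the edge of colour a is [step w a] (append a, or cancel a if w
   already ends with a).  The edge {w, step w a} has colour a. *)

Definition reduced d (s : seq 'I_d) : bool := sorted (fun a b => a != b) s.

Definition vertex (d : nat) := {s : seq 'I_d | reduced s}.

Definition step_seq d (s : seq 'I_d) (a : 'I_d) : seq 'I_d :=
  match s with
  | b :: t => if b == a then t else a :: s
  | [::] => [:: a]
  end.

Lemma step_reduced d (s : seq 'I_d) a : reduced s -> reduced (step_seq s a).
Proof.
case: s => [|b t] //= H.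
case: eqP => [_|/eqP nba].
  by case: t H => //= c t /andP [].
by rewrite /reduced /= eq_sym nba.
Qed.

Definition step d (v : vertex d) (a : 'I_d) : vertex d :=
  exist _ (step_seq (sval v) a) (step_reduced a (proj2_sig v)).

Definition adj d (v w : vertex d) : bool := [exists a, w == step v a].

Definition is_aut d (g : vertex d -> vertex d) : Prop :=
  bijective g /\ forall v w, adj (g v) (g w) = adj v w.

(* local action sigma(g,v) = c_{gv} o g_v o c_v^{-1} : Omega -> Omega *)
Definition sigma d (g : vertex d -> vertex d) (v : vertex d) (a : 'I_d) : 'I_d :=
  odflt a [pick b | g (step v a) == step (g v) b].

Definition fun_in d (H : {set {perm 'I_d}}) (f : 'I_d -> 'I_d) : bool :=
  [exists p in H, [forall a, p a == f a]].

Definition in_U d (F' : {set {perm 'I_d}}) (g : vertex d -> vertex d) : Prop :=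
  is_aut g /\ forall v, fun_in F' (sigma g v).

Definition in_G d (F : {set {perm 'I_d}}) (g : vertex d -> vertex d) : Prop :=
  is_aut g /\ exists s : seq (vertex d), forall v, ~~ fun_in F (sigma g v) -> v \in s.

Definition in_GFF d (F F' : {set {perm 'I_d}}) (g : vertex d -> vertex d) : Prop :=
  in_G F g /\ in_U F' g.

(* geodesic segments of length n starting at x: sequences of vertices
   x = v_0, v_1, ..., v_n with consecutive ones adjacent and all distinct
   (in a tree, simple paths are exactly the geodesics) *)
Definition geod_segment d (x : vertex d) (n : nat) (p : seq (vertex d)) : Prop :=
  size p = n.+1 /\ head x p = x /\ path (@adj d) x (behead p) /\ uniq p.

Definition stab_transitive_segments d (F F' : {set {perm 'I_d}}) (x : vertex d) (n : nat) : Prop :=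
  forall p q, geod_segment x n p -> geod_segment x n q ->
    exists g, in_GFF F F' g /\ g x = x /\ map g p = q.

From mathcomp Require Import all_boot all_fingroup all_solvable.
From mathcomp Require Import zify.

(* If the stabiliser of a vertex x in G(F,F') is transitive on the geodesic
   segments (x, x_a, x_ab) of length 2, then for every two such segments there
   is g fixing x and mapping the first to the second; its local action at the
   neighbour x_a, which lies in F', then sends the colours (a, b) of the two
   edges to (a', b').  Hence F' would be 2-transitive on Omega. *)

Set Implicit Arguments. Unset Strict Implicit. Unset Printing Implicit Defensive.

Section TreeSteps.
Variable d : nat.

Definition root : vertex d := exist _ [::] isT.

Lemma stepK (v : vertex d) a : step (step v a) a = v.
Proof.
apply: val_inj; case: v => [[|b t] Hs] //=; first by rewrite eqxx.
case: (eqVneq b a) => [<-|nba] /=; last by rewrite eqxx.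
case: t Hs => [|c t] //= /andP [nbc _].
by rewrite eq_sym (negbTE nbc).
Qed.

Lemma step_neq (v : vertex d) a : step v a != v.
Proof.
apply/eqP => /(congr1 (fun w => size (sval w))) /=.
by case: v => [[|b t] _] //=; case: eqP => _ /=; lia.
Qed.

Lemma step_inj (v : vertex d) : injective (step v).
Proof.
move=> a b /(congr1 sval) /=; case: v => [[|c t] _] /=; first by case.
case: (eqVneq c a) => [<-|nca]; case: (eqVneq c b) => [<-|ncb] //.
- by move=> /(congr1 size) /=; lia.
- by move=> /(congr1 size) /=; lia.
- by case.
Qed.

Lemma adj_step (v : vertex d) a : adj v (step v a).
Proof. by apply/existsP; exists a. Qed.

Lemma sigma_step (g : vertex d -> vertex d) v a b :
  g (step v a) = step (g v) b -> sigma g v a = b.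
Proof.
move=> gvab; rewrite /sigma; case: pickP => [c /eqP gvac | /(_ b)] /=.
  by apply: (@step_inj (g v)); rewrite -gvac.
by rewrite gvab eqxx.
Qed.

Lemma geod_segment2 (v : vertex d) a b : a != b ->
  geod_segment v 2 [:: v; step v a; step (step v a) b].
Proof.
move=> nab; do !split; first by rewrite /= !adj_step.
rewrite /= !inE negb_or andbT eq_sym step_neq [step v a == _]eq_sym step_neq.
by rewrite -{1}(stepK v a) (inj_eq (@step_inj (step v a))) nab.
Qed.

Lemma stab_transitive_segments2_pairs (F F' : {set {perm 'I_d}}) (x : vertex d) :
  stab_transitive_segments F F' x 2 ->
  forall a b a' b' : 'I_d, a != b -> a' != b' ->
  exists2 p, p \in F' & p a = a' /\ p b = b'.
Proof.
move=> trx a b a' b' nab nab'.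
have [g [[_ [_ gU]] [gx]]] := trx _ _ (geod_segment2 x nab) (geod_segment2 x nab').
case=> _ ga gab.
have /existsP [p /andP [pF' /forallP pE]] := gU (step x a).
exists p => //; rewrite (eqP (pE a)) (eqP (pE b)); split; apply: sigma_step.
  by rewrite stepK gx ga stepK.
by rewrite gab ga.
Qed.

End TreeSteps.

Lemma transitive2_of_pairs d (H : {group {perm 'I_d}}) : 1 < d ->
  (forall a b a' b' : 'I_d, a != b -> a' != b' ->
     exists2 p, p \in H & p a = a' /\ p b = b') ->
  [transitive^2 H, on [set: 'I_d] | 'P].
Proof.
move=> d1 pairsH; have d0 : 0 < d by apply: ltnW.
pose t0 := [tuple Ordinal d0; Ordinal d1].
have t0D : t0 \in 2.-dtuple([set: 'I_d]).
  by rewrite inE; apply/andP; split => //; apply: subsetT.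
apply/imsetP; exists t0 => //; apply/setP => u; apply/idP/idP.
  case/tupleP: u => a u; case/tupleP: u => b u; rewrite (tuple0 u) => abD.
  have nab : a != b by move: abD; rewrite inE /= inE andbT => /andP [].
  have [p pH [pa pb]] := pairsH _ _ _ _ (isT : Ordinal d0 != Ordinal d1) nab.
  apply/imsetP; exists p => //; apply: val_inj => /=.
  by rewrite !apermE pa pb.
case/imsetP => p _ ->; apply: n_act_dtuple t0D.
by apply/astabsP => x; rewrite !inE.
Qed.

Theorem mainTheorem10 (d : nat) (F F' : {group {perm 'I_d}}) :
  3 <= d ->
  F \subset F' ->
  (forall h, h \in F' -> forall w : 'I_d, exists2 f, f \in F & f w = h w) ->
  ~~ [transitive^2 F', on [set: 'I_d] | 'P] ->
  exists (x : vertex d) (n : nat), (n == 1 \/ n == 2) /\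
    ~ stab_transitive_segments F F' x n.
Proof.
move=> d3 _ _ /negP not2tr; exists (root d), 2; split; first by right.
move=> /stab_transitive_segments2_pairs pairsF'; apply: not2tr.
exact: transitive2_of_pairs (ltnW d3) pairsF'.
Qed.
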